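(* Let $Q^\star$ and $Q$ be two SPJ queries over the same schema. Suppose no database constraints are present, and suppose there exists some database instance $D$ on which $Q^\star$ or $Q$ returns a non-empty result. If $Q^\star$ and $Q$ are equivalent under bag semantics, then $\mathrm{Tables}(Q^\star)=\mathrm{Tables}(Q)$ as multisets. Equivalently, if $\mathrm{Tables}(Q^\star)\neq\mathrm{Tables}(Q)$ as multisets, then $Q^\star$ and $Q$ are not equivalent under bag semantics.
   Context: A database instance assigns to each table name of the schema a finite multiset (bag) of tuples over that table's columns. ''No database constraints'' means every such assignment is a legal instance. An SPJ query is a single-block SQL query of the form SELECT $e_1,\dots,e_k$ FROM $T_1$ AS $a_1$, …, $T_m$ AS $a_m$ WHERE $P$, with $m\ge 1$, where: - $a_1,\dots,a_m$ are distinct aliases, and the same table may occur several times (self-joins); - $P$ is a quantifier-free predicate over column references; - $e_1,\dots,e_k$ are scalar expressions over column references; - there is no GROUP BY, no aggregation, no HAVING and no DISTINCT. Under bag semantics the result of such a query is the following multiset: for every tuple of the bag cross product $T_1\times\dots\times T_m$ (multiplicities multiply) that satisfies $P$, the row $(e_1,\dots,e_k)$ evaluated on that tuple. $\mathrm{Tables}(Q)$ denotes the multiset $\{T_1,\dots,T_m\}$ of tables in the FROM clause of $Q$, counted with multiplicity. Two queries are equivalent under bag semantics if on every database instance they return the same multiset of result rows. *)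

From mathcomp Require Import all_boot.
Set Implicit Arguments. Unset Strict Implicit. Unset Printing Implicit Defensive.

(* A schema: a finite type of table names [Tab], each table [t] having
   [arity t] columns.  Values range over an arbitrary type [V] with decidable
   equality (needed to compare result rows). *)

Definition row_of (Tab : Type) (arity : Tab -> nat) (V : Type) (t : Tab) :=
  'I_(arity t) -> V.

(* A database instance: each table name is mapped to a finite bag of tuples,
   represented as a list (order irrelevant; multiplicity = number of
   occurrences).  With no constraints, every such assignment is legal. *)
Definition instance (Tab : Type) (arity : Tab -> nat) (V : Type) :=
  forall t : Tab, seq (row_of arity V t).

(* An SPJ query  SELECT e_1..e_k FROM T_1 AS a_1, ..., T_m AS a_m WHERE P.
   Aliases are the positions i : 'I_m (hence distinct); the same table may
   occur several times.  A column reference is a pair (alias i, column j of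
   table T_i); an assignment of values to all column references is an
   environment [env].  The predicate P and the scalar expressions e_l are
   (semantically) functions of the column references. *)
Record SPJ (Tab : Type) (arity : Tab -> nat) (V : Type) := {
  nfrom : nat;
  nfrom_pos : 0 < nfrom;
  from : 'I_nfrom -> Tab;
  nsel : nat;
  wherep : (forall i : 'I_nfrom, row_of arity V (from i)) -> bool;
  select : 'I_nsel -> (forall i : 'I_nfrom, row_of arity V (from i)) -> V
}.

Arguments from {Tab arity V} s _.
Arguments wherep {Tab arity V} s _.
Arguments select {Tab arity V} s _ _.
Arguments nfrom {Tab arity V} s.
Arguments nsel {Tab arity V} s.

Section Semantics.
Variables (Tab : finType) (arity : Tab -> nat) (V : eqType).

(* Bag semantics: enumerate every tuple of the bag cross product, i.e. every
   choice of one occurrence (an index) in each bag D(T_i); multiplicities thus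
   multiply. *)
Definition choice_env (Q : SPJ arity V) (D : instance arity V)
  (s : {dffun forall i : 'I_(nfrom Q), 'I_(size (D (from Q i)))}) :
  forall i : 'I_(nfrom Q), row_of arity V (from Q i) :=
  fun i => tnth (in_tuple (D (from Q i))) (s i).

Definition eval (Q : SPJ arity V) (D : instance arity V) : seq (seq V) :=
  [seq [seq select Q l (choice_env s) | l <- enum 'I_(nsel Q)]
  | s <- enum {dffun forall i : 'I_(nfrom Q), 'I_(size (D (from Q i)))}
  & wherep Q (choice_env s)].

Definition bag_equiv (Q1 Q2 : SPJ arity V) : Prop :=
  forall D : instance arity V, perm_eq (eval Q1 D) (eval Q2 D).

Definition tables (Q : SPJ arity V) : seq Tab :=
  [seq from Q i | i <- enum 'I_(nfrom Q)].

End Semantics.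

From mathcomp Require Import all_boot.
From Stdlib Require Import FunctionalExtensionality.
Set Implicit Arguments. Unset Strict Implicit. Unset Printing Implicit Defensive.

(* Replace every tuple of a table t by c t copies of it.  Each satisfying
   choice of tuples in the cross product then has prod_i c (T_i) copies, so
   the size of the result of an SPJ query is multiplied by the product of c
   over its FROM clause.  Taking c = 2 on a single table t and 1 elsewhere
   multiplies the size by 2 ^ (number of occurrences of t).  Bag equivalent
   queries have results of equal size on both instances; when these sizes
   are nonzero, the exponents of 2 agree for every t, which is the multiset
   equality of the FROM clauses. *)

Section ComponentwiseMap.
Variables (I : finType) (A B : I -> finType) (g : forall i, B i -> A i) (w : I -> nat).
Hypothesis card_fiber : forall i (a : A i), #|[pred b : B i | g b == a]| = w i.

Definition dffun_map (s : {dffun forall i, B i}) : {dffun forall i, A i} :=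
  finfun (fun i => g (s i)).

Lemma card_fiber_dffun_map (a : {dffun forall i, A i}) :
  #|[pred s | dffun_map s == a]| = \prod_i w i.
Proof.
transitivity (\prod_i #|[pred b : B i | g b == a i]|); last exact: eq_bigr.
rewrite -big_enum -(big_map _ xpredT id) -foldrE -card_family.
apply: eq_card => s; rewrite !inE.
apply/eqP/familyP => [<- i | fib]; first by rewrite ffunE inE.
by apply/ffunP => i; rewrite ffunE; apply/eqP/fib.
Qed.

Lemma card_preim_dffun_map (p : pred {dffun forall i, A i}) :
  #|[pred s | p (dffun_map s)]| = #|p| * \prod_i w i.
Proof.
rewrite -sum1_card (partition_big dffun_map p) //= -sum1_card big_distrl /=.
apply: eq_bigr => a pa; rewrite mul1n -(card_fiber_dffun_map a) -sum1_card.
by apply: eq_bigl => s; rewrite !inE; case: eqP => [->|]; rewrite ?pa ?andbF.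
Qed.

End ComponentwiseMap.

Lemma count_iota_mod n m j : j < m -> count (fun k => k %% m == j) (iota 0 (n * m)) = n.
Proof.
move=> lt_jm; elim: n => // n IH.
have shift : iota m (n * m) = map (addn m) (iota 0 (n * m)) by rewrite -iotaDl addn0.
rewrite mulSn iotaD count_cat add0n shift count_map -add1n -[in RHS]IH.
congr (_ + _); last by apply: eq_count => k /=; rewrite modnDl.
transitivity (count_mem j (iota 0 m)).
  by apply: eq_in_count => k; rewrite mem_iota add0n /= => /modn_small ->.
by rewrite count_uniq_mem ?iota_uniq // mem_iota lt_jm.
Qed.

Lemma card_ord_count_iota (N : nat) (P : pred nat) :
  #|[pred k : 'I_N | P k]| = count P (iota 0 N).
Proof.
rewrite -val_enum_ord count_map cardE /enum_mem size_filter count_filter.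
by apply: eq_count => k; rewrite !inE andbT.
Qed.

Section Replication.
Variables (T : Type) (n : nat) (s : seq T).

Lemma size_flatten_nseq : size (flatten (nseq n s)) = n * size s.
Proof. by elim: n => //= m IH; rewrite size_cat IH mulSn. Qed.

Lemma nth_flatten_nseq x0 k :
  k < n * size s -> nth x0 (flatten (nseq n s)) k = nth x0 s (k %% size s).
Proof.
elim: n k => // m IH k; rewrite mulSn /= nth_cat => lt_k.
case: ltnP => [/modn_small -> //|le_k].
by rewrite -{2}(subnK le_k) modnDr IH // ltn_subLR.
Qed.

Lemma replicate_index_subproof (k : 'I_(size (flatten (nseq n s)))) :
  k %% size s < size s.
Proof.
have lt_k : k < n * size s by rewrite -size_flatten_nseq.
by rewrite ltn_pmod // lt0n; apply: contraTneq lt_k => ->; rewrite muln0.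
Qed.

Definition replicate_index k : 'I_(size s) := Ordinal (replicate_index_subproof k).

Lemma tnth_replicate_index k :
  tnth (in_tuple (flatten (nseq n s))) k = tnth (in_tuple s) (replicate_index k).
Proof.
have x0 := tnth (in_tuple s) (replicate_index k).
by rewrite !(tnth_nth x0) nth_flatten_nseq // -size_flatten_nseq.
Qed.

Lemma card_replicate_index_fiber (j : 'I_(size s)) :
  #|[pred k | replicate_index k == j]| = n.
Proof.
rewrite (@card_ord_count_iota _ (fun x => x %% size s == j)).
by rewrite size_flatten_nseq count_iota_mod.
Qed.

End Replication.

Section ReplicatedInstance.
Variables (Tab : finType) (arity : Tab -> nat) (V : eqType).

Definition replicate_tables (c : Tab -> nat) (D : instance arity V) : instance arity V :=
  fun t => flatten (nseq (c t) (D t)).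

Lemma size_eval (Q : SPJ arity V) (D : instance arity V) :
  size (eval Q D) = #|[pred s | wherep Q (choice_env (D := D) s)]|.
Proof.
rewrite size_map cardE /enum_mem !size_filter count_filter.
by apply: eq_count => s; rewrite !inE andbT.
Qed.

Lemma size_eval_replicate_tables (c : Tab -> nat) (Q : SPJ arity V)
    (D : instance arity V) :
  size (eval Q (replicate_tables c D)) = size (eval Q D) * \prod_(t <- tables Q) c t.
Proof.
pose g i := @replicate_index _ (c (from Q i)) (D (from Q i)).
rewrite /tables big_map big_enum /= !size_eval.
rewrite -(card_preim_dffun_map (g := g)) => [|i]; last exact: card_replicate_index_fiber.
apply: eq_card => s; rewrite !inE; congr (wherep Q _).
apply: functional_extensionality_dep => i.
by rewrite /choice_env ffunE tnth_replicate_index.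
Qed.

End ReplicatedInstance.

Lemma prod_eq_succ (T : eqType) (t : T) (r : seq T) :
  \prod_(u <- r) (u == t).+1 = 2 ^ count_mem t r.
Proof.
elim: r => [|u r IH]; first by rewrite big_nil.
by rewrite big_cons IH /= eq_sym; case: (t == u); rewrite ?add1n ?expnS ?mul1n.
Qed.

Theorem mainTheorem1 (Tab : finType) (arity : Tab -> nat) (V : eqType)
  (Qstar Q : SPJ arity V) :
  (exists D : instance arity V, eval Qstar D != [::] \/ eval Q D != [::]) ->
  bag_equiv Qstar Q ->
  perm_eq (tables Qstar) (tables Q).
Proof.
move=> [D nonempty] equiv.
have size_eq D' : size (eval Qstar D') = size (eval Q D') := perm_size (equiv D').
have size_pos : 0 < size (eval Qstar D).
  by rewrite lt0n size_eq0; case: nonempty => //; rewrite -!size_eq0 size_eq.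
apply/allP => t _.
have := size_eq (replicate_tables (fun u => (u == t).+1) D).
rewrite !size_eval_replicate_tables !prod_eq_succ -size_eq => /eqP.
by rewrite eqn_pmul2l // eqn_exp2l.
Qed.
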